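(* Let $M$ be a compact metric space and $f:M\to M$ a continuous map such that $[a_{f,\mathcal{U}}(n)]\in\mathbb{L}$ for every finite open covering $\mathcal{U}$ of $M$. Then $o(f)\in\overline{\mathbb{L}}$ and the topological entropy satisfies $h(f)=0$.
   Context: Let $\mathcal{O}$ be the set of non-decreasing sequences $a:\mathbb{N}\to[0,\infty)$, $a\approx b$ iff $c_1a(n)\le b(n)\le c_2a(n)$ for all $n$ for some constants $0<c_1\le c_2$, $\mathbb{O}=\mathcal{O}/\!\approx$ with classes $[a(n)]$, ordered by $[a(n)]\le[b(n)]$ iff $a(n)\le Cb(n)$ for all $n$ for some $C>0$; $\overline{\mathbb{O}}$ is its Dedekind–MacNeille completion. $\mathbb{L}$ is the set of classes $[a(n)]$ with $[a(mn)]=[a(n)]$ for some integer $m\ge2$, and $\overline{\mathbb{L}}=\{\sup(\Gamma)\in\overline{\mathbb{O}}:\Gamma\subset\mathbb{L}\text{ countable}\}$. For a finite open covering $\mathcal{U}=\{U_1,\dots,U_k\}$ of $M$, $\mathcal{U}^n=\{U_{i_0}\cap f^{-1}(U_{i_1})\cap\cdots\cap f^{-n}(U_{i_n})\neq\emptyset\}$ and $a_{f,\mathcal{U}}(n)$ is the minimal cardinality of a subcovering of $\mathcal{U}^n$. The generalized entropy is $o(f)=\sup\{[a_{f,\mathcal{U}}(n)]:\mathcal{U}\text{ finite open covering}\}\in\overline{\mathbb{O}}$ (equivalently the supremum over $\varepsilon>0$ of the classes of the minimal cardinalities of $(n,\varepsilon)$-generators). $h(f)$ denotes the classical topological entropy.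 *)

From HB Require Import structures.
From mathcomp Require Import all_boot all_order all_algebra.
From mathcomp Require Import all_classical all_reals all_analysis.
Set Implicit Arguments. Unset Strict Implicit. Unset Printing Implicit Defensive.
Import Order.TTheory GRing.Theory Num.Theory.
Local Open Scope classical_set_scope.
Local Open Scope ring_scope.

Section Orders.
Variable R : realType.

Definition inO (a : nat -> R) : Prop :=
  (forall n, 0 <= a n) /\ (forall n m, (n <= m)%N -> a n <= a m).

Definition approx (a b : nat -> R) : Prop :=
  exists c1 c2 : R, 0 < c1 /\ c1 <= c2 /\
    forall n, c1 * a n <= b n /\ b n <= c2 * a n.

Definition cls_le (a b : nat -> R) : Prop :=
  exists C : R, 0 < C /\ forall n, a n <= C * b n.

Definition inL (a : nat -> R) : Prop :=
  inO a /\ exists m : nat, (2 <= m)%N /\ approx a (fun n => a (m * n)%N).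

Definition upper_bound (S : (nat -> R) -> Prop) (c : nat -> R) : Prop :=
  inO c /\ forall a, S a -> cls_le a c.

(* In the Dedekind–MacNeille completion, sup(S) = sup(T) iff S and T have the
   same upper bounds in 𝕆 (the completion element sup(S) is the cut S^{ul}). *)
Definition same_sup (S T : (nat -> R) -> Prop) : Prop :=
  forall c, upper_bound S c <-> upper_bound T c.

(* sup(S) ∈ 𝕃bar : sup(S) = sup(Γ) for a countable Γ ⊂ 𝕃.  A countable Γ
   relevant here is nonempty, so it is the range of a sequence b. *)
Definition sup_in_Lbar (S : (nat -> R) -> Prop) : Prop :=
  exists b : nat -> (nat -> R), (forall k, inL (b k)) /\
    same_sup S (fun a => exists k, a = b k).

End Orders.

Section Entropy.
Variable T : topologicalType.

Definition fin_open_cover (k : nat) (U : 'I_k -> set T) : Prop :=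
  (forall i, open (U i)) /\ (forall x : T, exists i, U i x).

(* the element U_{w 0} ∩ f^{-1}(U_{w 1}) ∩ ... ∩ f^{-n}(U_{w n}) of U^n *)
Definition refined (f : T -> T) (k n : nat) (U : 'I_k -> set T)
    (w : {ffun 'I_n.+1 -> 'I_k}) : set T :=
  [set x | forall j : 'I_n.+1, U (w j) (iter j f x)].

Definition covers (f : T -> T) (k n : nat) (U : 'I_k -> set T)
    (W : {set {ffun 'I_n.+1 -> 'I_k}}) : Prop :=
  forall x : T, exists2 w, w \in W & refined f U w x.

Definition acount (f : T -> T) (k : nat) (U : 'I_k -> set T) (n : nat) : nat :=
  \big[minn/#|[set: {ffun 'I_n.+1 -> 'I_k}]|]_(W : {set {ffun 'I_n.+1 -> 'I_k}}
        | `[< covers f U W >]) #|W|.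

Definition aseq (R : realType) (f : T -> T) (k : nat) (U : 'I_k -> set T) :
  nat -> R := fun n => (acount f U n)%:R.

Definition cover_seqs (R : realType) (f : T -> T) : (nat -> R) -> Prop :=
  fun a => exists k (U : 'I_k -> set T), fin_open_cover U /\ a = @aseq R f k U.

Definition o_in_Lbar (R : realType) (f : T -> T) : Prop :=
  sup_in_Lbar (@cover_seqs R f).

(* classical topological entropy (Adler–Konheim–McAndrew):
   h(f) = sup_U lim_n (1/n) log N(U^n); the limit exists, so we write limsup. *)
Definition htop (R : realType) (f : T -> T) : \bar R :=
  ereal_sup [set e | exists k (U : 'I_k -> set T), fin_open_cover U /\
     e = limn_esup (fun n => ((ln (@aseq R f k U n)) / n%:R)%:E)].

End Entropy.

From HB Require Import structures.
From mathcomp Require Import all_boot all_order all_algebra.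
From mathcomp Require Import all_classical all_reals all_analysis.
Import Order.TTheory GRing.Theory Num.Theory.
Local Open Scope classical_set_scope.
Local Open Scope ring_scope.
From mathcomp Require Import finmap lra.
Import numFieldNormedType.Exports.
Set Implicit Arguments. Unset Strict Implicit. Unset Printing Implicit Defensive.

(* The covering numbers a_{f,U} are monotone under refinement:
      if every member of V lies in a member of U then a_{f,U} <= a_{f,V}.
      On a compact metric space the coverings V_j by open sets of diameter
      < 2/(j+1) are cofinal for refinement (Lebesgue number lemma), so the
      countable family {[a_{f,V_j}]} ⊂ 𝕃 has the same upper bounds in 𝕆 as
      the family of all [a_{f,U}]; hence o(f) = sup_j [a_{f,V_j}] ∈ 𝕃bar.
   2. h(f) = 0.  If [a(mn)] = [a(n)] with m >= 2, then iterating the bound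
      a(mn) <= c a(n) along the scale m^j shows that a grows at most
      polynomially, a(n) <= B n^p; hence ln a(n) = O(sqrt n) and
      ln a(n) / n -> 0 for every covering, so the supremum h(f) is 0.
   The file develops, in order: counting lemmas for subcoverings of U^n,
   compactness lemmas (finite ball covers, Lebesgue number), an order-theoretic
   criterion for membership in 𝕃bar, the growth estimate for classes in 𝕃,
   and finally the theorem. *)

Section CoverCounting.
Variables (T : topologicalType) (f : T -> T).

Lemma acount_le k (U : 'I_k -> set T) n (W : {set {ffun 'I_n.+1 -> 'I_k}}) :
  covers f U W -> (acount f U n <= #|W|)%N.
Proof.
by move=> cW; rewrite /acount -minEnat -leEnat; apply: bigmin_le_cond; apply/asboolP.
Qed.

Lemma covers_setT k (U : 'I_k -> set T) n :
  (forall x, exists i, U i x) -> covers f U [set: {ffun 'I_n.+1 -> 'I_k}]%SET.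
Proof.
move=> cU x; have [w hw] := choice (fun j : 'I_n.+1 => cU (iter j f x)).
by exists (finfun w); rewrite ?inE // => j; rewrite ffunE.
Qed.

Lemma acount_attained k (U : 'I_k -> set T) n :
  (forall x, exists i, U i x) ->
  exists2 W : {set {ffun 'I_n.+1 -> 'I_k}}, covers f U W & #|W| = acount f U n.
Proof.
move=> cU; rewrite /acount -minEnat.
have -> : #|[set: {ffun 'I_n.+1 -> 'I_k}]| = #|{ffun 'I_n.+1 -> 'I_k}|.
  by apply: eq_card => w; rewrite in_setT.
have full : `[< covers f U [set: {ffun 'I_n.+1 -> 'I_k}]%SET >].
  exact/asboolP/covers_setT.
have [W /asboolP cW ->] := @eq_bigmin _ _ _ _ _
  (fun W => `[< covers f U W >]) (fun W => #|W|) full (fun W _ => max_card W).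
by exists W.
Qed.

(* Monotonicity under refinement: each member V l lies in U (g l), so a
   subcovering of V^n maps, letter by letter through g, onto one of U^n. *)
Lemma acount_refine k k' (U : 'I_k -> set T) (V : 'I_k' -> set T)
    (g : 'I_k' -> 'I_k) n :
  (forall x, exists i, V i x) -> (forall l, V l `<=` U (g l)) ->
  (acount f U n <= acount f V n)%N.
Proof.
move=> cV sVU; have [W cW <-] := acount_attained n cV.
pose gw (w : {ffun 'I_n.+1 -> 'I_k'}) : {ffun 'I_n.+1 -> 'I_k} := [ffun j => g (w j)].
apply: leq_trans (acount_le (W := gw @: W) _) (leq_imset_card _ _).
move=> x; have [w wW rw] := cW x; exists (gw w); first exact: imset_f.
by move=> j; rewrite ffunE; apply: sVU; exact: rw.
Qed.

End CoverCounting.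

Definition refines (T : Type) k k' (V : 'I_k' -> set T) (U : 'I_k -> set T) :=
  exists g : 'I_k' -> 'I_k, forall l, V l `<=` U (g l).

Lemma aseq_refine (R : realType) (T : topologicalType) (f : T -> T) k k'
    (U : 'I_k -> set T) (V : 'I_k' -> set T) :
  fin_open_cover V -> refines V U -> cls_le (aseq R f U) (aseq R f V).
Proof.
move=> [_ cV] [g sVU]; exists 1; split=> // n.
by rewrite mul1r ler_nat; exact: acount_refine sVU.
Qed.

(* The library identifies compactness with the finite subcover property for
   pointed spaces; any nonempty space becomes pointed by choosing a point. *)
Definition pointed_at (T : topologicalType) (x0 : T) : Type := T.
HB.instance Definition _ (T : topologicalType) (x0 : T) :=
  Topological.copy (@pointed_at T x0) T.
HB.instance Definition _ (T : topologicalType) (x0 : T) :=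
  isPointed.Build (@pointed_at T x0) x0.

Lemma compact_cover_compact (T : topologicalType) :
  compact [set: T] -> cover_compact [set: T].
Proof.
move=> cT I D F oF sF; have [[x0 _]|nT] := pselect (exists x : T, True).
  have : cover_compact [set: @pointed_at T x0] by rewrite -compact_cover.
  exact.
by exists fset0 => // x; case: nT; exists x.
Qed.

Section CompactPseudoMetric.
Variables (R : realType) (M : pseudoMetricType R).
Hypothesis hM : compact [set: M].

Lemma finite_ball_subcover (rad : M -> R) : (forall x, 0 < rad x) ->
  exists D : {fset M}, forall y, exists2 c, c \in D & (ball c (rad c))° y.
Proof.
move=> rad0; have := compact_cover_compact hM.
move=> /(_ M setT (fun x => (ball x (rad x))°)) [].
- by move=> x _; exact: open_interior.
- move=> x _; exists x => //; apply: nbhs_singleton; apply: nbhs_interior.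
  exact: nbhsx_ballx.
by move=> D _ cD; exists D => y; have [c /= cD' hy] := cD y I; exists c.
Qed.

Lemma small_open_cover (r : R) : 0 < r -> exists k (V : 'I_k -> set M),
  fin_open_cover V /\ forall l, exists c, V l `<=` ball c r.
Proof.
move=> r0; have [D cD] := finite_ball_subcover (fun=> r0).
pose s := in_tuple (enum_fset D).
exists (size (enum_fset D)), (fun l => (ball (tnth s l) r)°); split; first split.
- by move=> l; exact: open_interior.
- move=> y; have [c cD' hy] := cD y.
  by have /tnthP[l el] : c \in s by []; exists l; rewrite -el.
- by move=> l; exists (tnth s l); exact: interior_subset.
Qed.

Lemma lebesgue_number k (U : 'I_k -> set M) : fin_open_cover U ->
  exists2 d : R, 0 < d & forall y, exists i, ball y d `<=` U i.
Proof.
move=> [oU cU].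
have /choice[rad rad_spec] : forall x, exists p : 'I_k * R,
    0 < p.2 /\ ball x p.2 `<=` U p.1.
  move=> x; have [i Uix] := cU x.
  have /nbhs_ballP[r /= r0 brU] : nbhs x (U i) by exact: open_nbhs_nbhs.
  by exists (i, r).
have rad0 x : 0 < (rad x).2 / 2 by rewrite divr_gt0 //; case: (rad_spec x).
have [D cD] := finite_ball_subcover rad0.
exists (\big[Order.min/1]_(c <- enum_fset D) ((rad c).2 / 2)).
  by apply: lt_bigmin.
move=> y; have [c cD' /interior_subset yc] := cD y.
exists (rad c).1 => z yz; apply: (proj2 (rad_spec c)).
apply: le_ball (ball_triangle yc yz).
have : \big[Order.min/1]_(c <- enum_fset D) ((rad c).2 / 2) <= (rad c).2 / 2.
  exact: ge_bigmin_seq.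
lra.
Qed.

Lemma small_covers_cofinal : exists VV : nat -> {k : nat & 'I_k -> set M},
  (forall j, fin_open_cover (projT2 (VV j))) /\
  forall k (U : 'I_k -> set M), fin_open_cover U ->
    exists j, refines (projT2 (VV j)) U.
Proof.
have /choice[VV VVspec] : forall j, exists V : {k : nat & 'I_k -> set M},
    fin_open_cover (projT2 V) /\
    forall l, exists c, projT2 V l `<=` ball c j.+1%:R^-1.
  move=> j; have r0 : 0 < j.+1%:R^-1 :> R by rewrite invr_gt0.
  have [k [V [cV sV]]] := small_open_cover r0.
  by exists (existT _ k V).
exists VV; split=> [j|k U cU]; first by case: (VVspec j).
have [d d0 hd] := lebesgue_number cU.
pose j := Num.truncn d^-1; exists j; have [_ sV] := VVspec j.
have jd : j.+1%:R^-1 <= d.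
  rewrite -[leRHS]invrK lef_pV2 ?posrE ?invr_gt0 //.
  exact/ltW/truncnS_gt.
suff /choice[g sg] : forall l, exists i, projT2 (VV j) l `<=` U i.
  by exists g.
move=> l; have [c sc] := sV l; have [i sbi] := hd c.
by exists i => x /sc cx; apply: sbi; exact: le_ball jd _ cx.
Qed.

End CompactPseudoMetric.

Section LbarCriterion.
Variable R : realType.

Lemma cls_le_trans (a b c : nat -> R) : cls_le a b -> cls_le b c -> cls_le a c.
Proof.
move=> [C1 [C10 hab]] [C2 [C20 hbc]]; exists (C1 * C2); split; first exact: mulr_gt0.
by move=> n; rewrite -mulrA; apply: le_trans (hab n) _; rewrite ler_pM2l.
Qed.

Lemma sup_in_Lbar_cofinal (S : (nat -> R) -> Prop) (b : nat -> nat -> R) :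
  (forall j, inL (b j)) -> (forall j, S (b j)) ->
  (forall a, S a -> exists j, cls_le a (b j)) -> sup_in_Lbar S.
Proof.
move=> bL Sb cof; exists b; split=> // c; split=> -[ic ub]; split=> // a.
- by move=> [j ->]; exact: ub.
- by move=> /cof[j aj]; apply: cls_le_trans aj (ub _ _); exists j.
Qed.

End LbarCriterion.

Section Growth.
Variable R : realType.

Lemma inL_scale_bound (a : nat -> R) : inL a -> exists m K,
  [/\ (2 <= m)%N, 1 <= K & forall j n, (0 < n)%N -> (n <= m ^ j)%N ->
                                       a n <= K ^+ j * a 1%N].
Proof.
move=> [[a0 amono] [m [m2 [c1 [c2 [c10 [c12 hc]]]]]]].
exists m, (Num.max c2 1); split=> //; first by rewrite le_max lexx orbT.
elim=> [|j IH] [|n] // _.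
  by rewrite expn0 ltnS leqn0 => /eqP ->; rewrite expr0 mul1r.
rewrite expnS => nle; pose q := (n %/ m)%N.
have h1 : (n.+1 <= m * q.+1)%N.
  rewrite [in leqLHS](divn_eq n m) mulnC mulnS addnC ltn_add2r.
  by rewrite ltn_pmod // (leq_trans _ m2).
have h2 : (q.+1 <= m ^ j)%N by rewrite ltn_divLR ?(leq_trans _ m2) // mulnC.
apply: le_trans (amono _ _ h1) _; apply: le_trans (proj2 (hc q.+1)) _.
rewrite exprS -mulrA; apply: ler_pM => //; first exact: le_trans (ltW c10) c12.
- by rewrite le_max lexx.
- exact: IH.
Qed.

Lemma inL_poly_bound (a : nat -> R) : inL a -> exists (B : R) (p : nat),
  1 <= B /\ forall n, (0 < n)%N -> a n <= B * n%:R ^+ p.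
Proof.
move=> aL; have a1_ge0 : 0 <= a 1%N by case: aL => -[].
have [m [K [m2 K1 aK]]] := inL_scale_bound aL.
pose p := (Num.truncn K).+1.
have K2p : K <= (2 ^ p)%N%:R.
  apply: le_trans (ltW (truncnS_gt K)) _; rewrite ler_nat; exact/ltnW/ltn_expl.
exists ((2 ^ p)%N%:R * (a 1%N + 1)), p; split.
  by rewrite -[leLHS]mulr1 ler_pM // ?ler1n ?expn_gt0 // lerDr.
move=> n n0; pose t := trunc_log m n.
have n_le : (n <= m ^ t.+1)%N by exact/ltnW/trunc_log_ltn.
have two_t : (2 ^ t <= n)%N.
  have exp_mono e : (2 ^ e <= m ^ e)%N by elim: e => // e IH; rewrite !expnS leq_mul.
  exact: leq_trans (exp_mono t) (trunc_logP m2 n0).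
have Kt : K ^+ t.+1 <= ((2 ^ p) * n ^ p)%N%:R.
  apply: le_trans (_ : ((2 ^ p) ^ t.+1)%N%:R <= _).
    by rewrite natrX lerXn2r // ?nnegrE //; lra.
  by rewrite ler_nat -expnM mulnC expnM expnS expnMn leq_mul2l leq_exp2r // two_t orbT.
apply: le_trans (aK _ _ n0 n_le) _; rewrite mulrAC.
apply: ler_pM => //; first by apply: exprn_ge0; lra.
- by rewrite -natrX -natrM.
- lra.
Qed.

Lemma ln_le_2sqrt (x : R) : 0 < x -> ln x <= 2 * Num.sqrt x.
Proof.
move=> x0; have s0 : 0 < Num.sqrt x by rewrite sqrtr_gt0.
rewrite -[in ln _](sqr_sqrtr (ltW x0)) lnXn // mulr_natl mulr2n.
by have := ln_sublinear s0; lra.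
Qed.

Lemma ln_poly_bound (N : nat) (B : R) p n : 1 <= B -> (0 < n)%N ->
  N%:R <= B * n%:R ^+ p ->
  ln (N%:R : R) <= (ln B + 2 * p%:R) * Num.sqrt n%:R.
Proof.
move=> B1 n0 hN.
have s1 : 1 <= Num.sqrt (n%:R : R) by rewrite -[leLHS]sqrtr1 ler_sqrt // ler1n.
have lnB : 0 <= ln B by exact: ln_ge0.
have lnn : ln (n%:R : R) <= 2 * Num.sqrt n%:R by apply: ln_le_2sqrt; rewrite ltr0n.
have [->|N0] := posnP N.
  by rewrite ln0 // mulr_ge0 // ?addr_ge0 ?mulr_ge0 //; lra.
have np0 : 0 < (n%:R : R) ^+ p by rewrite exprn_gt0 // ltr0n.
apply: le_trans (_ : ln (B * n%:R ^+ p) <= _).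
  by rewrite ler_ln // posrE ?ltr0n // mulr_gt0 //; lra.
rewrite lnM ?posrE //; last lra.
rewrite lnXn ?ltr0n // -[ln _ *+ p]mulr_natl.
have hB : ln B <= ln B * Num.sqrt n%:R by rewrite ler_peMr.
have hp : p%:R * ln (n%:R : R) <= p%:R * (2 * Num.sqrt n%:R) by rewrite ler_wpM2l.
lra.
Qed.

Lemma inL_entropy_zero (N : nat -> nat) : inL (fun n => (N n)%:R : R) ->
  limn_esup (fun n => ((ln ((N n)%:R : R)) / n%:R)%:E) = 0%E.
Proof.
move=> NL; have [B [p [B1 hB]]] := inL_poly_bound NL.
set C := ln B + 2 * p%:R.
have C0 : 0 <= C by rewrite addr_ge0 ?ln_ge0 // mulr_ge0.
pose u n := ln ((N n)%:R : R) / n%:R.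
have u0 n : 0 <= u n.
  apply: divr_ge0 => //; have [->|N0] := posnP (N n); first by rewrite ln0.
  by apply: ln_ge0; rewrite ler1n.
have cu : u @ \oo --> (0 : R).
  apply/cvgrPdist_le => e e0; exists (Num.truncn ((C / e) ^+ 2)).+1 => // n /= hn.
  have n0 : (0 < n)%N by apply: leq_trans hn.
  rewrite sub0r normrN ger0_norm // ler_pdivrMr ?ltr0n //.
  apply: le_trans (ln_poly_bound B1 n0 (hB n n0)) _.
  have Ce : C / e <= Num.sqrt n%:R.
    rewrite -(@ger0_norm _ (C / e)) ?divr_ge0 ?(ltW e0) // -sqrtr_sqr ler_sqrt //.
    by apply/ltW/(lt_le_trans (truncnS_gt _)); rewrite ler_nat.
  rewrite -[in leRHS](sqr_sqrtr (ler0n _ n)) expr2 mulrA ler_wpM2r //.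
  by move: Ce; rewrite ler_pdivrMr // mulrC.
have ce : (fun n => (u n)%:E) @ \oo --> 0%E by apply: cvg_EFin => //; near=> n.
rewrite is_cvg_limn_esupE; last by apply/cvg_ex; exists 0%E.
exact: (cvg_lim (@ereal_hausdorff R)).
Unshelve. all: end_near.
Qed.

End Growth.

(* h(f) = 0 as soon as ln a_{f,U}(n) / n has limsup 0 for every covering U
   (the trivial covering {T} shows that the supremum is over a nonempty set). *)
Lemma htop_eq0 (R : realType) (T : topologicalType) (f : T -> T) :
  (forall k (U : 'I_k -> set T), fin_open_cover U ->
     limn_esup (fun n => ((ln (@aseq T R f k U n)) / n%:R)%:E) = 0%E) ->
  @htop T R f = 0%E.
Proof.
move=> h0; rewrite -[RHS]ereal_sup1 /htop; congr ereal_sup.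
have triv : fin_open_cover (fun _ : 'I_1 => [set: T]).
  by split=> [_|x]; [exact: openT | exists ord0].
apply/seteqP; split=> [e [k [U [cU ->]]]|e ->]; first exact: h0.
by exists 1%N, (fun=> setT); split=> //; rewrite h0.
Qed.

Theorem mainTheorem5 (R : realType) (M : metricType R) (f : M -> M)
  (hM : compact [set: M]) (hf : continuous f)
  (hL : forall (k : nat) (U : 'I_k -> set M), fin_open_cover U ->
          inL (@aseq M R f k U)) :
  @o_in_Lbar M R f /\ @htop M R f = 0%E.
Proof.
split; last by apply: htop_eq0 => k U cU; exact: inL_entropy_zero (hL k U cU).
have [VV [VVcover VVcofinal]] := small_covers_cofinal hM.
apply: (@sup_in_Lbar_cofinal _ _ (fun j => aseq R f (projT2 (VV j)))).
- by move=> j; exact: hL.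
- by move=> j; exists (projT1 (VV j)), (projT2 (VV j)).
- move=> _ [k [U [cU ->]]]; have [j VU] := VVcofinal k U cU.
  by exists j; exact: aseq_refine.
Qed.
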